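(* Let $T<\infty$ (so $\mathbb{T}=\{0,1,\dots,T\}$), and recall $G_t=\Delta$ on $D_t^c$. Define processes $(V_t)_{t\le T}$ (value process) and $(S_t)_{t\le T}$ (survival process) by backward recursion: $V_T=G_T$, $S_T=1_{D_T}$, and for $t=T-1,\dots,0$, \[ J_t=\frac{E[S_{t+1}V_{t+1}\mid\mathcal{F}_t]}{E[S_{t+1}\mid\mathcal{F}_t]}\quad\text{on } \{t<T_e\}, \] \[ \begin{cases} V_t=G_t,\ S_t=1 & \text{on } \{t<T_e\}\cap\{G_t\ge J_t\},\\ V_t=J_t,\ S_t=E[S_{t+1}\mid\mathcal{F}_t] & \text{on } \{t<T_e\}\cap\{G_t<J_t\},\\ V_t=G_t,\ S_t=1_{D_t} & \text{on } \{t\ge T_e\}. \end{cases} \] Then $\theta_t:=1_{\{G_t\ge V_t\}}$, $t\le T$, is the unique equilibrium with preference for early stopping.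
   Context: Let $T\in\mathbb{N}$ and $\mathbb{T}=\{0,1,\dots,T\}$. Let $(\Omega,\mathcal{F},P)$ be a probability space with a filtration $(\mathcal{F}_t)_{t\le T}$, $\mathcal{F}_0$ trivial. Let $\sigma$ be a stopping time with values in $\{0,1,2,\dots\}\cup\{\infty\}$ and $P(\sigma>0)=1$; set $D_t=\{t<\sigma\}$. Let $G=(G_t)_{t\le T}$ be an adapted payoff process; on $D_t^c$ one sets $G_t=\Delta$, an auxiliary symbol with the convention $0\cdot\Delta=0$. Standing assumption: $E[\sup_{t\le T}|G_t|1_{D_t}]<\infty$. For $s,t\in[0,\infty]$ write $s\lhd t$ iff $s<t$ or $t=\infty$. Convention: $\inf\emptyset=\infty$. The effective horizon is the random time $T_e=T\wedge\inf\{0\le t<T: P(D_{t+1}\mid\mathcal{F}_t)=0\}$. A stopping policy is a $\{0,1\}$-valued adapted process $\theta=(\theta_t)_{t\in\mathbb{T}}$, and $\mathcal{L}_t\theta=\inf\{s>t:\theta_s=1\}$. $\theta$ is admissible if $P(\mathcal{L}_t\theta\lhd\sigma\mid\mathcal{F}_t)>0$ on $\{t<T_e\}$ and $\theta_t=1$ on $\{t\ge T_e\}$. For admissible $\theta$, on $\{t<T_e\}$ the continuation value is $J_t(\theta)=E[G_{\mathcal{L}_t\theta}1_{\{\mathcal{L}_t\theta\lhd\sigma\}}\mid\mathcal{F}_t]/P(\mathcal{L}_t\theta\lhd\sigma\mid\mathcal{F}_t)$. Define $\Phi(\theta)_t=1$ on $\{t<T_e, G_t>J_t(\theta)\}$,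 $\Phi(\theta)_t=\theta_t$ on $\{t<T_e,G_t=J_t(\theta)\}$, $\Phi(\theta)_t=0$ on $\{t<T_e,G_t<J_t(\theta)\}$, $\Phi(\theta)_t=1$ on $\{t\ge T_e\}$. An equilibrium is an admissible $\theta$ with $\Phi(\theta)=\theta$; it is an equilibrium with preference for early stopping if in addition $\theta_t=1$ on $\{t<T_e, G_t=J_t(\theta)\}$ (i.e., $\theta_t=1$ exactly on $\{t\ge T_e\}\cup\{t<T_e,G_t\ge J_t(\theta)\}$). *)

From HB Require Import structures.
From mathcomp Require Import all_boot all_order all_algebra.
From mathcomp Require Import all_classical all_reals all_analysis.
Set Implicit Arguments.
Unset Strict Implicit.
Unset Printing Implicit Defensive.
Import Order.TTheory GRing.Theory Num.Theory.
Local Open Scope classical_set_scope.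
Local Open Scope ring_scope.

Section Defs.
Context (d : measure_display) (Omega : measurableType d) (R : realType).

Definition Fmeasurable (Fs : set (set Omega)) (f : Omega -> R) : Prop :=
  forall B : set R, measurable B -> Fs (f @^-1` B).

Definition cond_exp (P : probability Omega R) (Fs : set (set Omega))
    (X Y : Omega -> R) : Prop :=
  [/\ Fmeasurable Fs Y,
      P.-integrable setT (fun w => (Y w)%:E) &
      forall A, Fs A ->
        (\int[P]_(w in A) (Y w)%:E = \int[P]_(w in A) (X w)%:E)%E].

(** Times in {0,1,2,...} U {oo}: [Some n] = n, [None] = oo. *)
(** s <| t  iff  s < t or t = oo. *)
Definition lhd (s t : option nat) : bool :=
  match t with
  | None => true
  | Some t' => match s with Some s' => (s' < t')%N | None => false end
  end.

(** D_t = {t < sigma} *)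
Definition Dset (sigma : Omega -> option nat) (t : nat) (w : Omega) : bool :=
  lhd (Some t) (sigma w).

(** Effective horizon T_e = T /\ inf{0 <= t < T : pD t = 0}, where
    pD t is (a version of) P(D_{t+1} | F_t). *)
Definition Teff (T : nat) (pD : nat -> Omega -> R) (w : Omega) : nat :=
  find (fun t => pD t w == 0) (iota 0 T).

(** L_t theta = inf{s > t : theta_s = 1} (s ranging in {0..T}), None = oo. *)
Definition Lnext (T : nat) (theta : nat -> Omega -> bool) (t : nat)
    (w : Omega) : option nat :=
  let k := find (fun s => theta s w) (iota t.+1 (T - t)) in
  if (k < T - t)%N then Some (t.+1 + k)%N else None.

(** G evaluated at a random time; the value at oo is irrelevant
    (it is always multiplied by the indicator of L <| sigma, which is
    then [false] unless sigma = oo, and never occurs for admissible policies). *)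
Definition Gat (G : nat -> Omega -> R) (L : option nat) (w : Omega) : R :=
  match L with Some s => G s w | None => 0 end.

Definition standing (P : probability Omega R) (T : nat)
    (F : nat -> set (set Omega)) (sigma : Omega -> option nat)
    (G : nat -> Omega -> R) : Prop :=
  (forall t, (t <= T)%N -> sigma_algebra setT (F t) /\ F t `<=` measurable) /\
      (forall s t, (s <= t <= T)%N -> F s `<=` F t) /\
      (forall A, F 0%N A -> A = set0 \/ A = setT) /\
      ((forall t, measurable [set w | sigma w = Some t]) /\
      (forall t, (t <= T)%N -> F t [set w | sigma w = Some t])) /\
      P [set w | sigma w != Some 0%N] = 1%E /\
      (forall t, (t <= T)%N -> Fmeasurable (F t) (G t)) /\
      P.-integrable setT
        (fun w => (\big[Num.max/0]_(t < T.+1)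
                     (`|G t w| * (Dset sigma t w)%:R))%:E).

Definition admissible (P : probability Omega R) (T : nat)
    (F : nat -> set (set Omega)) (sigma : Omega -> option nat)
    (Te : Omega -> nat) (theta : nat -> Omega -> bool) : Prop :=
  (forall t, (t <= T)%N -> F t [set w | theta t w]) /\
  (forall t, (t <= T)%N ->
     (forall q, cond_exp P (F t)
                  (fun w => (lhd (Lnext T theta t w) (sigma w))%:R) q ->
        {ae P, forall w, (t < Te w)%N -> 0 < q w}) /\
     {ae P, forall w, (Te w <= t)%N -> theta t w}).

(** Equilibrium with preference for early stopping: admissible, and on
    {t < T_e}, theta_t = 1 iff G_t >= J_t(theta), where
    J_t(theta) = E[G_{L_t theta} 1_{L_t theta <| sigma} | F_t]
                 / P(L_t theta <| sigma | F_t). *)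
Definition equilibrium_pes (P : probability Omega R) (T : nat)
    (F : nat -> set (set Omega)) (sigma : Omega -> option nat)
    (G : nat -> Omega -> R) (Te : Omega -> nat)
    (theta : nat -> Omega -> bool) : Prop :=
  admissible P T F sigma Te theta /\
  forall t, (t <= T)%N -> forall num den,
    cond_exp P (F t)
      (fun w => Gat G (Lnext T theta t w) w *
                (lhd (Lnext T theta t w) (sigma w))%:R) num ->
    cond_exp P (F t)
      (fun w => (lhd (Lnext T theta t w) (sigma w))%:R) den ->
    {ae P, forall w, (t < Te w)%N ->
       theta t w = (num w / den w <= G t w)}.

End Defs.

From HB Require Import structures.
From mathcomp Require Import all_boot all_order all_algebra.
From mathcomp Require Import all_classical all_reals all_analysis.
From mathcomp Require Import measurable_realfun zify.
Import Order.TTheory GRing.Theory Num.Theory.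
Local Open Scope classical_set_scope.
Local Open Scope ring_scope.
Set Implicit Arguments.
Unset Strict Implicit.
Unset Printing Implicit Defensive.

(* Write L_t for L_t theta.  By backward induction on t, S_{t+1} V_{t+1} and
   S_{t+1} have the same integrals over every F_{t+1}-set as
   G_{L_t} 1_{L_t <| sigma} and 1_{L_t <| sigma}: on {theta_{t+1} = 1} both
   sides agree pointwise (up to a null set, D_{t+1} holds there), and on the
   complement S_{t+1} V_{t+1} = A_{t+1} and S_{t+1} = B_{t+1}, whose integrals
   are those of S_{t+2} V_{t+2} and S_{t+2}, to which the induction hypothesis
   applies.  Hence A_t and B_t are versions of the numerator and of the
   denominator of J_t(theta), which makes theta an equilibrium with preference
   for early stopping; admissibility comes from B_t > 0 on {t < T_e}, a
   consequence of S_{t+1} > 0 on D_{t+1} and P(D_{t+1} | F_t) > 0 on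
   {t < T_e}.  Conversely, an equilibrium that agrees with theta after t has
   the same L_t, hence the same J_t, hence takes the same decision at t. *)

Lemma backward_ind (n : nat) (Q : nat -> Prop) :
  Q n -> (forall t, (t < n)%N -> Q t.+1 -> Q t) -> forall t, (t <= n)%N -> Q t.
Proof.
move=> Qn QS t tn; rewrite -(subKn tn).
elim: (n - t)%N (leq_subr t n) => [|k IH] kn; first by rewrite subn0.
have kn' : (n - k.+1 < n)%N by rewrite ltn_subrL (leq_ltn_trans _ kn).
by apply: QS => //; rewrite -subSn // subSS; apply: IH; apply: ltnW.
Qed.

Section integral_sign.
Context d (T : measurableType d) (R : realType)
  (mu : {measure set T -> \bar R}).
Implicit Types (C : set T) (f g : T -> R).

Lemma measure0_ae_notin C :
  measurable C -> {ae mu, forall x, ~ C x} -> mu C = 0%E.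
Proof.
move=> mC [N [mN N0 CN]]; apply/eqP; rewrite -measure_le0 -N0.
by apply: le_measure; rewrite ?inE // => x Cx; apply: CN => /(_ Cx).
Qed.

Lemma ae_notin_measure0 C :
  measurable C -> mu C = 0%E -> {ae mu, forall x, ~ C x}.
Proof. by move=> mC C0; exists C; split => // x /= /contrapT. Qed.

Lemma eq_integral_ae C f g : measurable C ->
  measurable_fun setT f -> measurable_fun setT g ->
  {ae mu, forall x, C x -> f x = g x} ->
  (\int[mu]_(x in C) (f x)%:E = \int[mu]_(x in C) (g x)%:E)%E.
Proof.
move=> mC mf mg fg; apply: ae_eq_integral => //.
- by apply/measurable_EFinP; exact: measurable_funTS.
- by apply/measurable_EFinP; exact: measurable_funTS.
- by apply: filterS fg => x + Cx => /(_ Cx) ->.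
Qed.

Lemma integral_le0 C f :
  (forall x, C x -> f x <= 0) -> (\int[mu]_(x in C) (f x)%:E <= 0)%E.
Proof.
move=> f_le0; have Nf_ge0 x : C x -> (0 <= (- f x)%:E)%E.
  by move=> Cx; rewrite lee_fin oppr_ge0 f_le0.
have := integral_ge0N mu Nf_ge0; under eq_integral do rewrite -EFinN opprK.
by move=> ->; rewrite leeNl oppe0 integral_ge0.
Qed.

Lemma integral_abs_ae_ge0 C f : measurable C -> measurable_fun C f ->
  {ae mu, forall x, C x -> 0 <= f x} ->
  (\int[mu]_(x in C) `|(f x)%:E| = \int[mu]_(x in C) (f x)%:E)%E.
Proof.
move=> mC mf f_ge0; have mfe : measurable_fun C (EFin \o f).
  exact/measurable_EFinP.
apply: ae_eq_integral => //; first exact: measurableT_comp.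
by apply: filterS f_ge0 => x + Cx => /(_ Cx) fx; rewrite gee0_abs // lee_fin.
Qed.

Lemma ae_eq0_integral_le0 C f : measurable C -> measurable_fun C f ->
  {ae mu, forall x, C x -> 0 <= f x} -> (\int[mu]_(x in C) (f x)%:E <= 0)%E ->
  {ae mu, forall x, C x -> f x = 0}.
Proof.
move=> mC mf f_ge0 int_le0.
have mfe : measurable_fun C (EFin \o f) by exact/measurable_EFinP.
have int_abs0 : (\int[mu]_(x in C) `|(f x)%:E| = 0)%E.
  apply/eqP; rewrite eq_le integral_ge0 // andbT.
  by rewrite integral_abs_ae_ge0.
have := (ae_eq_integral_abs mu mC mfe).1 int_abs0.
by apply: filterS => x + Cx => /(_ Cx) [].
Qed.

Lemma measure0_integral_le0 C f : measurable C -> measurable_fun C f ->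
  (forall x, C x -> 0 < f x) -> (\int[mu]_(x in C) (f x)%:E <= 0)%E ->
  mu C = 0%E.
Proof.
move=> mC mf f_gt0 int_le0; apply: measure0_ae_notin => //.
have f_ge0 : {ae mu, forall x, C x -> 0 <= f x}.
  by apply: aeW => x Cx; exact/ltW/f_gt0.
apply: filterS (ae_eq0_integral_le0 mC mf f_ge0 int_le0) => x fx0 Cx.
by have := f_gt0 x Cx; rewrite fx0 // ltxx.
Qed.

Lemma measure0_integral_ge0 C f : measurable C -> measurable_fun C f ->
  (forall x, C x -> f x < 0) -> (0 <= \int[mu]_(x in C) (f x)%:E)%E ->
  mu C = 0%E.
Proof.
move=> mC mf f_lt0 int_ge0.
apply: (@measure0_integral_le0 C (fun x => - f x)) => //.
- exact: measurable_funN.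
- by move=> x Cx; rewrite oppr_gt0 f_lt0.
- have Nf_ge0 x : C x -> (0 <= (- f x)%:E)%E.
    by move=> Cx; rewrite lee_fin oppr_ge0 ltW // f_lt0.
  have := integral_ge0N mu Nf_ge0; under eq_integral do rewrite -EFinN opprK.
  by move=> e; rewrite -leeN2 oppe0 -e.
Qed.

Lemma measure0_integral_lt C f g : measurable C ->
  mu.-integrable C (EFin \o f) -> mu.-integrable C (EFin \o g) ->
  (forall x, C x -> f x < g x) ->
  (\int[mu]_(x in C) (f x)%:E = \int[mu]_(x in C) (g x)%:E)%E -> mu C = 0%E.
Proof.
move=> mC fi gi f_lt_g int_eq; apply: (@measure0_integral_le0 C (g \- f)) => //.
- apply: measurable_funB.
  + by have /measurable_int/measurable_EFinP := gi.
  + by have /measurable_int/measurable_EFinP := fi.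
- by move=> x Cx; rewrite subr_gt0 f_lt_g.
- under eq_integral do rewrite EFinB.
  by rewrite integralB_EFin // int_eq subee // integrable_fin_num.
Qed.

Lemma integral_setID C E (f : T -> \bar R) : measurable C -> measurable E ->
  measurable_fun setT f ->
  (\int[mu]_(x in C) f x =
   \int[mu]_(x in C `&` E) f x + \int[mu]_(x in C `\` E) f x)%E.
Proof.
move=> mC mE mf; rewrite -integral_setU.
- by rewrite setDE -setIUr setUCr setIT.
- exact: measurableI.
- exact: measurableD.
- exact: measurable_funTS.
- by rewrite setDE /disj_set setIACA setICr setI0.
Qed.

End integral_sign.

(* A sub-sigma-algebra Fs of Omega is handled as the measurable structure
   g_sigma_algebraType Fs on the same carrier, so that Fs-measurability is
   plain measurability and the library lemmas about it apply. *)
Section sub_sigma_algebra.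
Context d (Omega : measurableType d) (R : realType) (Fs : set (set Omega)).
Hypothesis Fs_sigma : sigma_algebra setT Fs.
Hypothesis Fs_meas : Fs `<=` measurable.
Local Notation FT := (g_sigma_algebraType Fs).

Lemma measurable_gFsE : (measurable : set (set FT)) = Fs.
Proof. exact: measurable_g_measurableTypeE. Qed.

Lemma FmeasurableP (f : Omega -> R) :
  Fmeasurable Fs f <-> measurable_fun [set: FT] f.
Proof.
split => [mf _ B mB|mf B mB]; first by rewrite setTI measurable_gFsE; exact: mf.
by have := mf measurableT B mB; rewrite setTI measurable_gFsE.
Qed.

Lemma measurable_fun_gFs d' (U : measurableType d') (f : Omega -> U) :
  measurable_fun [set: FT] f -> measurable_fun [set: Omega] f.
Proof.
move=> mf; apply: (measurableT_comp mf) => _ B mB; rewrite setTI preimage_id.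
exact: (smallest_sub (@sigma_algebra_measurable _ Omega) Fs_meas mB).
Qed.

Lemma Fmeasurable_measurable (f : Omega -> R) :
  Fmeasurable Fs f -> measurable_fun [set: Omega] f.
Proof. by move=> /FmeasurableP mf; exact: measurable_fun_gFs. Qed.

Lemma Fs_boolP (b : Omega -> bool) :
  Fs [set w | b w] <-> measurable_fun [set: FT] b.
Proof.
split => [Fb|mb].
  by apply: (measurable_fun_bool true); rewrite setTI measurable_gFsE.
by have := mb measurableT [set true] I; rewrite setTI measurable_gFsE.
Qed.

Lemma Fs_setD (C E : set Omega) : Fs C -> Fs E -> Fs (C `\` E).
Proof. by rewrite -measurable_gFsE; exact: measurableD. Qed.

End sub_sigma_algebra.

Definition integrals_agree d (Omega : measurableType d) (R : realType)
    (P : probability Omega R) (Fs : set (set Omega)) (X Y : Omega -> R) :=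
  forall C, Fs C ->
    (\int[P]_(w in C) (X w)%:E = \int[P]_(w in C) (Y w)%:E)%E.

Section conditional_expectation.
Context d (Omega : measurableType d) (R : realType) (P : probability Omega R).
Implicit Types (Fs : set (set Omega)) (X Y Z : Omega -> R).

Lemma integrals_agreeS Fs Fs' X Y : Fs `<=` Fs' ->
  integrals_agree P Fs' X Y -> integrals_agree P Fs X Y.
Proof. by move=> FsFs' XY C /FsFs'; exact: XY. Qed.

Lemma cond_exp_agree Fs X X' Y : cond_exp P Fs X Y ->
  integrals_agree P Fs X X' -> cond_exp P Fs X' Y.
Proof. by move=> [mY iY YX] XX'; split => // C FC; rewrite YX // XX'. Qed.

Variable Fs : set (set Omega).
Hypothesis Fs_sigma : sigma_algebra setT Fs.
Hypothesis Fs_meas : Fs `<=` measurable.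

Lemma ae_eq_integrals_agree X Y :
  measurable_fun setT X -> measurable_fun setT Y ->
  {ae P, forall w, X w = Y w} -> integrals_agree P Fs X Y.
Proof.
move=> mX mY XY C /Fs_meas mC; apply: eq_integral_ae => //.
by apply: filterS XY => w ->.
Qed.

Lemma Fs_lt Y Z :
  Fmeasurable Fs Y -> Fmeasurable Fs Z -> Fs [set w | Y w < Z w].
Proof.
move=> /(FmeasurableP Fs_sigma) mY /(FmeasurableP Fs_sigma) mZ.
by apply/(Fs_boolP Fs_sigma); exact: measurable_fun_ltr.
Qed.

Lemma integrals_agree_ge0 X Y : Fmeasurable Fs Y -> measurable_fun setT X ->
  integrals_agree P Fs Y X -> {ae P, forall w, 0 <= X w} ->
  {ae P, forall w, 0 <= Y w}.
Proof.
move=> FY mX YX X_ge0.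
have FC : Fs [set w | Y w < 0].
  by apply: Fs_lt => //; apply/(FmeasurableP Fs_sigma); exact: measurable_cst.
have mC := Fs_meas FC.
have mY : measurable_fun setT Y.
  exact: (Fmeasurable_measurable Fs_sigma Fs_meas).
have PC : P [set w | Y w < 0] = 0%E.
  apply: (measure0_integral_ge0 mC (measurable_funTS mY)) => //.
  rewrite YX // -integral_abs_ae_ge0 ?integral_ge0 //.
  - exact: measurable_funTS.
  - by apply: filterS X_ge0.
by apply: filterS (ae_notin_measure0 mC PC) => w /negP; rewrite -leNgt.
Qed.

Lemma integrals_agree_pos X1 X2 Y1 Y2 :
  Fmeasurable Fs Y1 -> Fmeasurable Fs Y2 ->
  measurable_fun setT X1 -> measurable_fun setT X2 ->
  integrals_agree P Fs Y1 X1 -> integrals_agree P Fs Y2 X2 ->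
  {ae P, forall w, 0 <= X1 w} -> {ae P, forall w, X1 w = 0 -> X2 w = 0} ->
  {ae P, forall w, 0 < Y2 w -> 0 < Y1 w}.
Proof.
move=> FY1 FY2 mX1 mX2 Y1X1 Y2X2 X1_ge0 X2_0.
pose C := [set w | (Y1 w <= 0) && (0 < Y2 w)].
have FC : Fs C.
  apply/(Fs_boolP Fs_sigma); apply: measurable_and.
  - apply: measurable_fun_ler; last exact: measurable_cst.
    exact/(FmeasurableP Fs_sigma).
  - apply: measurable_fun_ltr; first exact: measurable_cst.
    exact/(FmeasurableP Fs_sigma).
have mC := Fs_meas FC.
have X1_0 : {ae P, forall w, C w -> X1 w = 0}.
  apply: (ae_eq0_integral_le0 mC (measurable_funTS mX1)).
  - by apply: filterS X1_ge0 => w + _.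
  - by rewrite -Y1X1 //; apply: integral_le0 => w /andP[].
have PC : P C = 0%E.
  apply: (measure0_integral_le0 mC (f := Y2)).
  - apply: measurable_funTS; exact: (Fmeasurable_measurable Fs_sigma Fs_meas).
  - by move=> w /andP[].
  rewrite Y2X2 // (eq_integral_ae (g := fun=> 0)) //.
    by rewrite integral0.

  by apply: filterS2 X1_0 X2_0 => w h1 h2 Cw; rewrite h2 ?h1.
apply: filterS (ae_notin_measure0 mC PC) => w notC Y2_gt0.
rewrite ltNge; apply/negP => Y1_le0; apply: notC.
by rewrite /C /= Y1_le0 Y2_gt0.
Qed.

Lemma cond_exp_unique X Y Z : cond_exp P Fs X Y -> cond_exp P Fs X Z ->
  {ae P, forall w, Y w = Z w}.
Proof.
have le Y1 Y2 : cond_exp P Fs X Y1 -> cond_exp P Fs X Y2 ->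
    {ae P, forall w, Y1 w <= Y2 w}.
  move=> [FY1 iY1 Y1X] [FY2 iY2 Y2X].
  have FC := Fs_lt FY2 FY1; have mC := Fs_meas FC.
  have PC : P [set w | Y2 w < Y1 w] = 0%E.
    apply: (measure0_integral_lt mC (f := Y2) (g := Y1)) => //.
    - exact: (integrableS measurableT mC (subsetT _) iY2).
    - exact: (integrableS measurableT mC (subsetT _) iY1).
    - by rewrite Y1X // Y2X.
  by apply: filterS (ae_notin_measure0 mC PC) => w /negP; rewrite -leNgt.
move=> XY XZ; apply: filterS2 (le _ _ XY XZ) (le _ _ XZ XY) => w YZ ZY.
by apply/le_anti; rewrite YZ ZY.
Qed.

Lemma integrals_agree_step Fs' E X X' Y Z Z' : Fs `<=` Fs' -> Fs E ->
  measurable_fun setT X -> measurable_fun setT Y -> measurable_fun setT Z ->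
  {ae P, forall w, E w -> X w = Z w} -> {ae P, forall w, ~ E w -> X w = Y w} ->
  (forall w, ~ E w -> Z w = Z' w) ->
  integrals_agree P Fs Y X' -> integrals_agree P Fs' X' Z' ->
  integrals_agree P Fs X Z.
Proof.
move=> FsFs' FE mX mY mZ XZ XY ZZ' YX' X'Z' C FC.
have mC := Fs_meas FC; have mE := Fs_meas FE.
have FCE : Fs (C `\` E) := Fs_setD Fs_sigma FC FE.
rewrite [LHS](integral_setID _ mC mE); last exact/measurable_EFinP.
rewrite [RHS](integral_setID _ mC mE); last exact/measurable_EFinP.
congr (_ + _)%E.
  apply: eq_integral_ae => //; first exact: measurableI.
  by apply: filterS XZ => w XZw [_ /XZw].
rewrite (eq_integral_ae (g := Y)) //.
- rewrite YX' // X'Z'; last exact: FsFs'.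
  by apply: eq_integral => w; rewrite inE => -[_ /ZZ' ->].
- exact: measurableD.
- by apply: filterS XY => w XYw [_ /XYw].
Qed.

End conditional_expectation.

Section stopping_times.
Context d (Omega : measurableType d) (R : realType).
Implicit Types (th : nat -> Omega -> bool) (w : Omega) (T t : nat).

Lemma Lnext_ge T th t w : (T <= t)%N -> Lnext T th t w = None.
Proof. by rewrite /Lnext -subn_eq0 => /eqP ->. Qed.

Lemma LnextS T th t w : (t < T)%N ->
  Lnext T th t w = if th t.+1 w then Some t.+1 else Lnext T th t.+1 w.
Proof.
move=> tT; rewrite /Lnext -(subnSK tT) /=.
case: (th t.+1 w) => /=; first by rewrite addn0.
by rewrite ltnS -addSnnS.
Qed.

Lemma eq_Lnext T th1 th2 t w :
  (forall u, (t < u <= T)%N -> th1 u w = th2 u w) ->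
  Lnext T th1 t w = Lnext T th2 t w.
Proof.
move=> th12; rewrite /Lnext (@eq_in_find _ _ (fun s => th2 s w)) // => u.
by rewrite mem_iota => /andP[tu uT]; apply: th12; apply/andP; split => //; lia.
Qed.

Lemma Teff_le T (pD : nat -> Omega -> R) w : (Teff T pD w <= T)%N.
Proof. by rewrite /Teff -[leqRHS](size_iota 0 T) find_size. Qed.

Lemma Teff_gt T (pD : nat -> Omega -> R) t w : (t < Teff T pD w)%N =
  (t < T)%N && all (fun s => pD s w != 0) (iota 0 t.+1).
Proof.
case: (ltnP t T) => tT; rewrite ?andTb ?andFb; last first.
  by apply/negbTE; rewrite -leqNgt (leq_trans (Teff_le _ _ _) tT).
rewrite (eq_all (a2 := predC (fun s => pD s w == 0))) // all_predC /Teff.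
rewrite -(subnKC tT) [in LHS]iotaD find_cat size_iota.
case: ifP => [|_]; last by rewrite ltn_addr.
by rewrite has_find size_iota ltnS leqNgt => /negbTE.
Qed.

Lemma Teff_pD T (pD : nat -> Omega -> R) t w :
  (t < Teff T pD w)%N -> pD t w != 0.
Proof.
by rewrite Teff_gt => /andP[_ /allP]; apply; rewrite mem_iota add0n ltnSn.
Qed.

Lemma DsetS (sigma : Omega -> option nat) t w :
  Dset sigma t.+1 w -> Dset sigma t w.
Proof. by rewrite /Dset /lhd; case: (sigma w) => // n; exact: ltnW. Qed.

Lemma DsetE (sigma : Omega -> option nat) t w :
  Dset sigma t w = all (fun u => sigma w != Some u) (iota 0 t.+1).
Proof.
rewrite /Dset /lhd; case: (sigma w) => [n|]; last by apply/esym/allP.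
rewrite (eq_all (a2 := predC (pred1 n))) => [|u /=]; last by rewrite eq_sym.
by rewrite all_predC has_pred1 mem_iota add0n ltnS ltnNge.
Qed.

End stopping_times.

Section measurable_bool.
Context d (X : measurableType d) (R : realType).

Lemma measurable_natr_bool (b : X -> bool) : measurable_fun setT b ->
  measurable_fun setT (fun x => (b x)%:R : R).
Proof.
move=> mb; rewrite (_ : (fun x => _) = fun x => if b x then 1 else 0).
  exact: measurable_fun_ifT.
by apply/funext => x; case: (b x).
Qed.

Lemma measurable_fun_all (s : seq nat) (p : nat -> X -> bool) :
  (forall u, u \in s -> measurable_fun setT (p u)) ->
  measurable_fun setT (fun x => all (fun u => p u x) s).
Proof.
elim: s => [|a s IH] mp /=; first exact: measurable_cst.
apply: measurable_and; first by apply: mp; rewrite inE eqxx.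
by apply: IH => u us; apply: mp; rewrite inE us orbT.
Qed.

Lemma measurable_fun_ler_div (f g h : X -> R) : measurable_fun setT f ->
  measurable_fun setT g -> measurable_fun setT h ->
  measurable_fun setT (fun x => f x / g x <= h x).
Proof.
move=> mf mg mh.
have le_divE (a b c : R) : (a / b <= c) =
    if 0 < b then a <= c * b else if b < 0 then c * b <= a else 0 <= c.
  case: (ltgtP 0 b) => b0; first exact: ler_pdivrMr.
  - exact: ler_ndivrMr.
  - by rewrite -b0 invr0 mulr0.
under eq_fun do rewrite le_divE.
apply: measurable_fun_ifT; first exact: measurable_fun_ltr.
  by apply: measurable_fun_ler => //; exact: measurable_funM.
apply: measurable_fun_ifT; first exact: measurable_fun_ltr.
  by apply: measurable_fun_ler => //; exact: measurable_funM.
exact: measurable_fun_ler.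
Qed.

End measurable_bool.

Section backward_recursion.
Context d (Omega : measurableType d) (R : realType) (P : probability Omega R)
  (T : nat) (F : nat -> set (set Omega)) (sigma : Omega -> option nat)
  (G : nat -> Omega -> R) (pD A B V S : nat -> Omega -> R).
Hypothesis standing_PF : standing P T F sigma G.
Hypothesis pD_cond : forall t, (t < T)%N ->
  cond_exp P (F t) (fun w => (Dset sigma t.+1 w)%:R) (pD t).
Hypothesis A_cond : forall t, (t < T)%N ->
  cond_exp P (F t) (fun w => S t.+1 w * V t.+1 w) (A t).
Hypothesis B_cond : forall t, (t < T)%N -> cond_exp P (F t) (S t.+1) (B t).
Hypothesis VS_T : forall w, V T w = G T w /\ S T w = (Dset sigma T w)%:R.
Hypothesis VS_rec : forall t w, (t < T)%N ->
  if (t < Teff T pD w)%N then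
    (if A t w / B t w <= G t w
     then V t w = G t w /\ S t w = 1
     else V t w = A t w / B t w /\ S t w = B t w)
  else V t w = G t w /\ S t w = (Dset sigma t w)%:R.

Local Notation FT t := (g_sigma_algebraType (F t)).
Local Notation Te := (Teff T pD).
Local Notation D := (Dset sigma).

Definition theta t w := V t w <= G t w.

Definition next_alive (th : nat -> Omega -> bool) t w : R :=
  (lhd (Lnext T th t w) (sigma w))%:R.

Definition next_payoff (th : nat -> Omega -> bool) t w : R :=
  Gat G (Lnext T th t w) w * next_alive th t w.

Lemma F_sigma t : (t <= T)%N -> sigma_algebra setT (F t).
Proof. by move=> tT; case: standing_PF => /(_ t tT) []. Qed.

Lemma F_meas t : (t <= T)%N -> F t `<=` measurable.
Proof. by move=> tT; case: standing_PF => /(_ t tT) []. Qed.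

Lemma F_mono s t : (s <= t <= T)%N -> F s `<=` F t.
Proof. by move=> stT; case: standing_PF => _ [+ _]; apply. Qed.

Lemma measurable_FT_mono d' (U : measurableType d') s t (f : Omega -> U) :
  (s <= t <= T)%N ->
  measurable_fun [set: FT s] f -> measurable_fun [set: FT t] f.
Proof.
move=> /[dup] /andP[st tT] stT mf _ Y mY; have := mf measurableT Y mY.
rewrite !setTI (measurable_gFsE (F_sigma (leq_trans st tT))).
by rewrite (measurable_gFsE (F_sigma tT)); exact: F_mono.
Qed.

Lemma measurable_FT d' (U : measurableType d') t (f : Omega -> U) :
  (t <= T)%N -> measurable_fun [set: FT t] f -> measurable_fun [set: Omega] f.
Proof. by move=> tT; exact/measurable_fun_gFs/F_meas. Qed.

Lemma measurable_G t : (t <= T)%N -> measurable_fun [set: FT t] (G t).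
Proof.
move=> tT; apply/(FmeasurableP (F_sigma tT)).
by case: standing_PF => _ [_ [_ [_ [_ [+ _]]]]]; apply.
Qed.

Lemma measurable_pD t : (t < T)%N -> measurable_fun [set: FT t] (pD t).
Proof.
by move=> tT; apply/(FmeasurableP (F_sigma (ltnW tT))); case: (pD_cond tT).
Qed.

Lemma measurable_A t : (t < T)%N -> measurable_fun [set: FT t] (A t).
Proof.
by move=> tT; apply/(FmeasurableP (F_sigma (ltnW tT))); case: (A_cond tT).
Qed.

Lemma measurable_B t : (t < T)%N -> measurable_fun [set: FT t] (B t).
Proof.
by move=> tT; apply/(FmeasurableP (F_sigma (ltnW tT))); case: (B_cond tT).
Qed.

Lemma measurable_D t : (t <= T)%N -> measurable_fun [set: FT t] (D t).
Proof.
move=> tT; rewrite (funext (DsetE sigma t)).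
apply: measurable_fun_all => u; rewrite mem_iota add0n ltnS leq0n andTb => ut.
apply/measurable_neg/(Fs_boolP (F_sigma tT)); apply: (@F_mono u).
  by rewrite ut tT.
have -> : [set w | sigma w == Some u] = [set w | sigma w = Some u].
  by apply/seteqP; split => w /= /eqP.
by case: standing_PF => _ [_ [_ [[_ +] _]]]; apply; exact: leq_trans tT.
Qed.

Lemma measurable_Te_gt t : (t < T)%N ->
  measurable_fun [set: FT t] (fun w => (t < Te w)%N).
Proof.
move=> tT; under eq_fun do rewrite Teff_gt tT andTb.
apply: measurable_fun_all => s; rewrite mem_iota add0n ltnS leq0n andTb => st.
apply/measurable_neg/measurable_fun_eqr => //.
by apply: (@measurable_FT_mono _ _ s); [lia|apply: measurable_pD; lia].
Qed.

Lemma thetaE t w : (t < T)%N ->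
  theta t w = if (t < Te w)%N then A t w / B t w <= G t w else true.
Proof.
move=> tT; rewrite /theta; have := VS_rec w tT; case: ifP => _.
  by case: ifP => J_le_G [-> _]; rewrite ?lexx ?J_le_G.
by move=> [-> _]; rewrite lexx.
Qed.

Lemma theta_T w : theta T w.
Proof. by rewrite /theta (VS_T w).1 lexx. Qed.

Lemma theta_continue t w : (t < T)%N -> ~~ theta t w ->
  [/\ (t < Te w)%N, S t w = B t w & B t w != 0 -> S t w * V t w = A t w].
Proof.
move=> tT; rewrite thetaE //; have := VS_rec w tT.
case: ifP => // t_Te; case: ifP => // _ [-> ->] _.
by split => // B_neq0; rewrite mulrC divfK.
Qed.

Lemma theta_stop t w : (t < T)%N -> theta t w -> ((t < Te w)%N -> D t w) ->
  S t w = (D t w)%:R /\ S t w * V t w = G t w * (D t w)%:R.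
Proof.
move=> tT; rewrite thetaE //; have := VS_rec w tT.
case: ifP => t_Te; last by move=> [-> ->]; rewrite mulrC.
by case: ifP => // _ [-> ->] _ /(_ isT) ->; rewrite mul1r mulr1.
Qed.

Lemma measurable_theta t : (t <= T)%N -> measurable_fun [set: FT t] (theta t).
Proof.
rewrite leq_eqVlt => /orP[/eqP ->|tT].
  by rewrite (_ : theta T = fun=> true) //; apply/funext => w; rewrite theta_T.
rewrite (_ : theta t = fun w =>
    if (t < Te w)%N then A t w / B t w <= G t w else true).
  2: by apply/funext => w; rewrite thetaE.
apply: measurable_fun_ifT => //; first exact: measurable_Te_gt.
by apply: measurable_fun_ler_div; [exact: measurable_A|exact: measurable_B|
                                   apply: measurable_G; exact: ltnW].
Qed.

Lemma S_E t w : (t < T)%N -> S t w =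
  if (t < Te w)%N then (if A t w / B t w <= G t w then 1 else B t w)
  else (D t w)%:R.
Proof.
by move=> tT; have := VS_rec w tT; case: ifP => _; [case: ifP => _|]; case.
Qed.

Lemma SV_E t w : (t < T)%N -> S t w * V t w =
  if (t < Te w)%N then
    (if A t w / B t w <= G t w then G t w else if B t w == 0 then 0 else A t w)
  else (D t w)%:R * G t w.
Proof.
move=> tT; have := VS_rec w tT; case: ifP => _; last by case=> -> ->.
case: ifP => _ [-> ->]; first by rewrite mul1r.
by have [->|B_neq0] := eqVneq (B t w) 0; rewrite ?mul0r // mulrC divfK.
Qed.

Lemma measurable_D_natr t : (t <= T)%N ->
  measurable_fun [set: Omega] (fun w => (D t w)%:R : R).
Proof.
move=> tT; apply/measurable_natr_bool/(measurable_FT tT).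
exact: measurable_D.
Qed.

Lemma measurable_S t : (t <= T)%N -> measurable_fun [set: FT t] (S t).
Proof.
rewrite leq_eqVlt => /orP[/eqP ->|tT].
  rewrite (funext (fun w => (VS_T w).2)).
  by apply: measurable_natr_bool; exact: measurable_D.
rewrite (funext (fun w => S_E w tT)); have tT' := ltnW tT.
apply: measurable_fun_ifT; first exact: measurable_Te_gt.
  apply: measurable_fun_ifT => //; last exact: measurable_B.
  by apply: measurable_fun_ler_div; [exact: measurable_A|exact: measurable_B|
                                     exact: measurable_G].
by apply: measurable_natr_bool; exact: measurable_D.
Qed.

Lemma measurable_SV t : (t <= T)%N ->
  measurable_fun [set: FT t] (fun w => S t w * V t w).
Proof.
rewrite leq_eqVlt => /orP[/eqP ->|tT].
  under eq_fun do rewrite (VS_T _).1 (VS_T _).2.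
  by apply: measurable_funM; [apply: measurable_natr_bool; exact: measurable_D|
                              exact: measurable_G].
under eq_fun do rewrite SV_E //; have tT' := ltnW tT.
have mJ_le_G := measurable_fun_ler_div (measurable_A tT) (measurable_B tT)
  (measurable_G tT').
apply: measurable_fun_ifT; first exact: measurable_Te_gt.
  apply: measurable_fun_ifT => //; first exact: measurable_G.
  apply: measurable_fun_ifT => //; last exact: measurable_A.
  by apply: measurable_fun_eqr => //; exact: measurable_B.
by apply: measurable_funM; [apply: measurable_natr_bool; exact: measurable_D|
                            exact: measurable_G].
Qed.

Lemma pD_ge0 t : (t < T)%N -> {ae P, forall w, 0 <= pD t w}.
Proof.
move=> tT; have tT' := ltnW tT; case: (pD_cond tT) => FpD _ pD_D.
apply: (integrals_agree_ge0 (F_sigma tT') (F_meas tT') FpD _ pD_D).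
  exact: measurable_D_natr.
by apply: aeW => w; rewrite ler0n.
Qed.

Lemma pD_gt0_D t : (t < T)%N -> {ae P, forall w, 0 < pD t w -> D t w}.
Proof.
move=> tT; have tT' := ltnW tT; case: (pD_cond tT) => FpD _ pD_D.
have FD : Fmeasurable (F t) (fun w => (D t w)%:R : R).
  apply/(FmeasurableP (F_sigma tT')); apply: measurable_natr_bool.
  exact: measurable_D.
have D_S w : (D t w)%:R = 0 :> R -> (D t.+1 w)%:R = 0 :> R.
  by case Dt1: (D t.+1 w); rewrite ?(DsetS Dt1).
apply: filterS (integrals_agree_pos (F_sigma tT') (F_meas tT') FD FpD
  (measurable_D_natr tT') (measurable_D_natr tT) (fun C _ => erefl) pD_D
  (aeW _ (fun w => ler0n _ _)) (aeW _ D_S)) => w D_pos /D_pos.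
by case: (D t w); rewrite ?ltxx.
Qed.

Lemma Te_gt_pD t : (t < T)%N -> {ae P, forall w, (t < Te w)%N -> 0 < pD t w}.
Proof.
move=> tT; apply: filterS (pD_ge0 tT) => w pD_ge0 /Teff_pD pD_neq0.
by rewrite lt_neqAle eq_sym pD_neq0.
Qed.

Lemma Te_gt_D t : (t < T)%N -> {ae P, forall w, (t < Te w)%N -> D t w}.
Proof.
move=> tT; apply: filterS2 (Te_gt_pD tT) (pD_gt0_D tT) => w pD_pos D_of.
by move=> /pD_pos; exact: D_of.
Qed.

Lemma B_pos t : (t < T)%N ->
  {ae P, forall w, 0 <= S t.+1 w /\ (D t.+1 w -> 0 < S t.+1 w)} ->
  {ae P, forall w, 0 <= B t w /\ (0 < pD t w -> 0 < B t w)}.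
Proof.
move=> tT S_pos; have tT' := ltnW tT.
case: (B_cond tT) => FB _ B_S; case: (pD_cond tT) => FpD _ pD_D.
have mS := measurable_FT tT (measurable_S tT).
have S_ge0 : {ae P, forall w, 0 <= S t.+1 w} by apply: filterS S_pos => w [].
have S_D : {ae P, forall w, S t.+1 w = 0 -> (D t.+1 w)%:R = 0 :> R}.
  apply: filterS S_pos => w [_ S_gt0] S0.
  by case: (D t.+1 w) S_gt0 => // /(_ isT); rewrite S0 ltxx.
apply: filterS2 (integrals_agree_ge0 (F_sigma tT') (F_meas tT') FB mS B_S S_ge0)
  (integrals_agree_pos (F_sigma tT') (F_meas tT') FB FpD mS
     (measurable_D_natr tT) B_S pD_D S_ge0 S_D) => w.
by split.
Qed.

Lemma S_pos_of_B t : (t < T)%N ->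
  {ae P, forall w, 0 <= B t w /\ (0 < pD t w -> 0 < B t w)} ->
  {ae P, forall w, 0 <= S t w /\ (D t w -> 0 < S t w)}.
Proof.
move=> tT B_pos; apply: filterS2 B_pos (Te_gt_pD tT) => w [B_ge0 B_gt0] pD_gt0.
rewrite S_E //; case: ifP => [/pD_gt0/B_gt0 B_w_gt0|_].
  by case: ifP => _; rewrite ?ler01 ?ltr01 ?(ltW B_w_gt0).
by split=> [|->]; rewrite ?ler0n ?ltr01.
Qed.

Lemma S_pos t : (t <= T)%N ->
  {ae P, forall w, 0 <= S t w /\ (D t w -> 0 < S t w)}.
Proof.
move: t; apply: backward_ind => [|s sT /(B_pos sT)/(S_pos_of_B sT)] //.
by apply: aeW => w; rewrite (VS_T w).2; split=> [|->]; rewrite ?ler0n ?ltr01.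
Qed.

Lemma B_gt0 t : (t < T)%N -> {ae P, forall w, (t < Te w)%N -> 0 < B t w}.
Proof.
move=> tT; apply: filterS2 (B_pos tT (S_pos tT)) (Te_gt_pD tT).
by move=> w [_ B_of] pD_pos /pD_pos /B_of.
Qed.

Lemma next_payoffS th t w : (t < T)%N -> next_payoff th t w =
  if th t.+1 w then G t.+1 w * (D t.+1 w)%:R else next_payoff th t.+1 w.
Proof.
by move=> tT; rewrite /next_payoff /next_alive LnextS //; case: (th t.+1 w).
Qed.

Lemma next_aliveS th t w : (t < T)%N -> next_alive th t w =
  if th t.+1 w then (D t.+1 w)%:R else next_alive th t.+1 w.
Proof. by move=> tT; rewrite /next_alive LnextS //; case: (th t.+1 w). Qed.

Lemma measurable_sigma_infty :
  measurable_fun [set: Omega] (fun w => lhd None (sigma w)).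
Proof.
apply: (measurable_fun_bool true); rewrite setTI.
have -> : (fun w => lhd None (sigma w)) @^-1` [set true] =
    ~` \bigcup_n [set w | sigma w = Some n].
  apply/seteqP; split => w; rewrite /preimage /=;
    case sw: (sigma w) => [n|] //=.
  - by move=> _ [m _]; rewrite /= sw.
  - by move=> sigma_n; exfalso; apply: sigma_n; exists n.
apply/measurableC/bigcupT_measurable => n.
by case: standing_PF => _ [_ [_ [[+ _] _]]]; apply.
Qed.

Lemma measurable_next th :
  (forall u, (u <= T)%N -> measurable_fun [set: Omega] (th u)) ->
  forall t, (t <= T)%N -> measurable_fun [set: Omega] (next_payoff th t) /\
                          measurable_fun [set: Omega] (next_alive th t).
Proof.
move=> mth; apply: backward_ind => [|t tT [IHpay IHalive]].
  rewrite /next_payoff /next_alive.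
  rewrite (funext (fun w => Lnext_ge th w (leqnn T))) /=.
  split; first by under eq_fun do rewrite mul0r; exact: measurable_cst.
  exact: measurable_natr_bool measurable_sigma_infty.
rewrite (funext (fun w => next_payoffS th w tT)).
rewrite (funext (fun w => next_aliveS th w tT)).
have mD := measurable_D_natr tT.
split; apply: measurable_fun_ifT => //; first exact: mth.
  apply: measurable_funM => //; apply: (measurable_FT tT).
  exact: measurable_G.
exact: mth.
Qed.

Lemma measurable_theta_Omega u :
  (u <= T)%N -> measurable_fun [set: Omega] (theta u).
Proof. by move=> uT; apply: (measurable_FT uT); exact: measurable_theta. Qed.

Lemma integrals_agree_next t : (t < T)%N ->
  integrals_agree P (F t.+1) (fun w => S t.+1 w * V t.+1 w)
    (next_payoff theta t) /\
  integrals_agree P (F t.+1) (S t.+1) (next_alive theta t).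
Proof.
move=> tT; have tT' := ltnW tT; move: t tT' tT.
apply: backward_ind => [/[!ltnn]//|t tT IH _].
have [t1T|t1T] := eqVneq t.+1 T.
  split=> C _; apply: eq_integral => w _; have := VS_T w; rewrite -t1T.
    by rewrite next_payoffS // t1T theta_T -t1T => -[-> ->]; rewrite mulrC.
  by rewrite next_aliveS // t1T theta_T -t1T => -[_ ->].
have sT : (t.+1 < T)%N by rewrite ltn_neqAle t1T.
have [IHpay IHalive] := IH sT.
have FE : F t.+1 [set w | theta t.+1 w].
  by apply/(Fs_boolP (F_sigma tT)); exact: measurable_theta.
have stop : {ae P, forall w, theta t.+1 w ->
    S t.+1 w = (D t.+1 w)%:R /\ S t.+1 w * V t.+1 w = G t.+1 w * (D t.+1 w)%:R}.
  by apply: filterS (Te_gt_D sT) => w D_of th; exact: theta_stop.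
have cont : {ae P, forall w, ~ theta t.+1 w ->
    S t.+1 w = B t.+1 w /\ S t.+1 w * V t.+1 w = A t.+1 w}.
  apply: filterS (B_gt0 sT) => w B_gt0 /negP /(theta_continue sT) [/B_gt0].
  by rewrite lt0r => /andP[B_neq0 _] -> /(_ B_neq0).
have F_S : F t.+1 `<=` F t.+2 by apply: F_mono; rewrite leqnSn sT.
have [mpay malive] := measurable_next measurable_theta_Omega (ltnW tT).
have [[_ _ A_SV] [_ _ B_S]] := (A_cond sT, B_cond sT).
split.
- apply: (integrals_agree_step (F_sigma tT) (F_meas tT) F_S FE _ _ mpay _ _ _
    A_SV IHpay).
  + by apply: (measurable_FT tT); exact: measurable_SV.
  + by apply: (measurable_FT tT); exact: measurable_A.
  + apply: filterS stop => w + th => /(_ th) [_ ->].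
    by rewrite next_payoffS // th.
  + by apply: filterS cont => w + th => /(_ th) [_ ->].
  + by move=> w /negP/negbTE th; rewrite next_payoffS // th.
- apply: (integrals_agree_step (F_sigma tT) (F_meas tT) F_S FE _ _ malive _ _ _
    B_S IHalive).
  + by apply: (measurable_FT tT); exact: measurable_S.
  + by apply: (measurable_FT tT); exact: measurable_B.
  + apply: filterS stop => w + th => /(_ th) [-> _].
    by rewrite next_aliveS // th.
  + by apply: filterS cont => w + th => /(_ th) [-> _].
  + by move=> w /negP/negbTE th; rewrite next_aliveS // th.
Qed.

Lemma cond_exp_next t : (t < T)%N ->
  cond_exp P (F t) (next_payoff theta t) (A t) /\
  cond_exp P (F t) (next_alive theta t) (B t).
Proof.
move=> tT; have [pay alive] := integrals_agree_next tT.
have Ft : F t `<=` F t.+1 by apply: F_mono; rewrite leqnSn tT.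
by split; apply: cond_exp_agree; [exact: A_cond|exact: integrals_agreeS pay|
                                   exact: B_cond|exact: integrals_agreeS alive].
Qed.

Lemma theta_admissible : admissible P T F sigma Te theta.
Proof.
split=> [t tT|t].
  by apply/(Fs_boolP (F_sigma tT)); exact: measurable_theta.
rewrite leq_eqVlt => /orP[/eqP ->|tT].
  by split=> [q _|]; apply: aeW => w; rewrite ?theta_T // ltnNge Teff_le.
split=> [q q_B|].
  2: by apply: aeW => w; rewrite thetaE // leqNgt => /negbTE ->.
have q_eq_B := cond_exp_unique (F_sigma (ltnW tT)) (F_meas (ltnW tT)) q_B
  (cond_exp_next tT).2.
by apply: filterS2 q_eq_B (B_gt0 tT) => w ->.
Qed.

Lemma theta_equilibrium : equilibrium_pes P T F sigma G Te theta.
Proof.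
split=> [|t]; first exact: theta_admissible.
rewrite leq_eqVlt => /orP[/eqP -> num den _ _|tT num den num_A den_B].
  by apply: aeW => w; rewrite ltnNge Teff_le.
have [A_next B_next] := cond_exp_next tT.
have uniq := @cond_exp_unique _ _ _ P _ (F_sigma (ltnW tT)) (F_meas (ltnW tT)).
apply: filterS2 (uniq _ _ _ num_A A_next) (uniq _ _ _ den_B B_next) => w -> ->.
by move=> t_Te; rewrite thetaE // t_Te.
Qed.

Lemma cond_exp_next_agree th t :
  (forall u, (u <= T)%N -> measurable_fun [set: Omega] (th u)) -> (t < T)%N ->
  {ae P, forall w u, (t < u <= T)%N -> th u w = theta u w} ->
  cond_exp P (F t) (next_payoff th t) (A t) /\
  cond_exp P (F t) (next_alive th t) (B t).
Proof.
move=> mth tT th_theta.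
have next_eq : {ae P, forall w, next_payoff th t w = next_payoff theta t w /\
                                next_alive th t w = next_alive theta t w}.
  apply: filterS th_theta => w th_theta; rewrite /next_payoff /next_alive.
  by rewrite (eq_Lnext (th2 := theta)).
have [mpay malive] := measurable_next mth (ltnW tT).
have [mpay' malive'] := measurable_next measurable_theta_Omega (ltnW tT).
have agree X Y := @ae_eq_integrals_agree _ _ _ P _ (F_meas (ltnW tT)) X Y.
have [A_next B_next] := cond_exp_next tT.
split; [apply: (cond_exp_agree A_next)|apply: (cond_exp_agree B_next)];
  by apply: agree => //; apply: filterS next_eq => w [].
Qed.

Lemma equilibrium_pes_unique th : equilibrium_pes P T F sigma G Te th ->
  forall t, (t <= T)%N -> {ae P, forall w, th t w = theta t w}.
Proof.
move=> [[th_adapted th_adm] th_eq].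
have mth u : (u <= T)%N -> measurable_fun [set: Omega] (th u).
  move=> uT; apply: (measurable_FT uT).
  by apply/(Fs_boolP (F_sigma uT))/th_adapted.
suff agree_after t : (t <= T)%N ->
    {ae P, forall w u, (t <= u <= T)%N -> th u w = theta u w}.
  by move=> t tT; apply: filterS (agree_after t tT) => w; apply; rewrite leqnn.
move: t; apply: backward_ind => [|t tT IH].
  apply: filterS (th_adm T (leqnn T)).2 => w thT u /andP[Tu uT].
  by rewrite (@anti_leq u T) ?Tu ?uT // theta_T thT // Teff_le.
have [A_th B_th] := cond_exp_next_agree mth tT IH.
apply: filterS3 (th_eq t (ltnW tT) _ _ A_th B_th) (th_adm t (ltnW tT)).2 IH.
move=> w th_J th_Te th_after u /andP[].
rewrite leq_eqVlt => /orP[/eqP <- _|tu uT]; last by apply: th_after; rewrite tu.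
rewrite thetaE //; case: ifP => t_Te; first exact: th_J.
by rewrite th_Te // leqNgt t_Te.
Qed.

End backward_recursion.

Unset Implicit Arguments.
Set Strict Implicit.

Theorem theorem3p1 (d : measure_display) (Omega : measurableType d)
  (R : realType) (P : probability Omega R) (T : nat)
  (F : nat -> set (set Omega)) (sigma : Omega -> option nat)
  (G : nat -> Omega -> R)
  (pD A B V S : nat -> Omega -> R) :
  standing P T F sigma G ->
  (* pD t is a version of P(D_{t+1} | F_t) *)
  (forall t, (t < T)%N ->
     cond_exp P (F t) (fun w => (Dset sigma t.+1 w)%:R) (pD t)) ->
  (* A t, B t are versions of E[S_{t+1} V_{t+1} | F_t], E[S_{t+1} | F_t] *)
  (forall t, (t < T)%N ->
     cond_exp P (F t) (fun w => S t.+1 w * V t.+1 w) (A t)) ->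
  (forall t, (t < T)%N -> cond_exp P (F t) (S t.+1) (B t)) ->
  (* backward recursion, with J_t = A t / B t on {t < T_e} *)
  (forall w, V T w = G T w /\ S T w = (Dset sigma T w)%:R) ->
  (forall t w, (t < T)%N ->
     if (t < Teff T pD w)%N then
       (if A t w / B t w <= G t w
        then V t w = G t w /\ S t w = 1
        else V t w = A t w / B t w /\ S t w = B t w)
     else V t w = G t w /\ S t w = (Dset sigma t w)%:R) ->
  let theta := fun t w => V t w <= G t w in
  equilibrium_pes P T F sigma G (Teff T pD) theta /\
  (forall theta' : nat -> Omega -> bool,
     equilibrium_pes P T F sigma G (Teff T pD) theta' ->
     forall t, (t <= T)%N -> {ae P, forall w, theta' t w = theta t w}).
Proof.
move=> standing_PF pD_cond A_cond B_cond VS_T VS_rec theta.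
split=> [|th th_eq].
  exact: theta_equilibrium standing_PF pD_cond A_cond B_cond VS_T VS_rec.
exact: equilibrium_pes_unique standing_PF pD_cond A_cond B_cond VS_T VS_rec
  th th_eq.
Qed.
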